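(* Let $q$ be a prime power, $Q=q^m$, $\mathbb{L}=\mathrm{GF}(Q)$, $n\mid Q-1$, and $F_n=\{f\in\mathbb{L}^n : f_{qi\bmod n}=f_i^q\ \forall i\in\mathbb{Z}/n\mathbb{Z}\}$. Let $0\le\delta\le1/2$ and $s=\lfloor\delta n\rfloor$. If every $g\in\mathbb{L}^n$ can be written as $g=f+h$ with $f\in F_n$ and $|\{i : h_i\ne0\}|\le s$, then $$1+\frac{h_2(\delta)}{\log_2 q}+\delta\log_q(Q-1)\ge m-o(1),$$ where $h_2(\delta)=-\delta\log_2\delta-(1-\delta)\log_2(1-\delta)$ and $o(1)$ denotes a term tending to $0$ as $n\to\infty$. *)

From HB Require Import structures.
From mathcomp Require Import all_boot all_order all_algebra.
From mathcomp Require Import all_classical all_reals all_analysis.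
Set Implicit Arguments. Unset Strict Implicit. Unset Printing Implicit Defensive.
Import Order.TTheory GRing.Theory Num.Theory.
Local Open Scope ring_scope.

Definition prime_power (q : nat) : Prop :=
  exists p k : nat, prime p /\ (0 < k)%N /\ q = (p ^ k)%N.

Definition mulq_ord (n q : nat) (i : 'I_n) : 'I_n :=
  Ordinal (ltn_pmod (q * i) (leq_ltn_trans (leq0n i) (ltn_ord i))).

Definition in_Fn (L : finFieldType) (q n : nat) (f : 'I_n -> L) : Prop :=
  forall i : 'I_n, f (mulq_ord q i) = f i ^+ q.

Definition wt (L : finFieldType) (n : nat) (h : 'I_n -> L) : nat :=
  #|[set i : 'I_n | h i != 0]|.

Definition Fn_covers (R : realType) (L : finFieldType) (q n : nat) (delta : R)
  : Prop :=
  forall g : 'I_n -> L, exists (f h : 'I_n -> L),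
    in_Fn q f /\ (forall i, g i = f i + h i) /\
    ((wt h)%:Z <= Num.floor (delta * n%:R))%R.

Definition log2 (R : realType) (x : R) : R := ln x / ln 2.
Definition logb (R : realType) (b x : R) : R := ln x / ln b.

Definition xlog2x (R : realType) (x : R) : R := if x == 0 then 0 else x * log2 x.

Definition h2 (R : realType) (d : R) : R := - xlog2x d - xlog2x (1 - d).

From HB Require Import structures.
From mathcomp Require Import all_boot all_order all_algebra all_fingroup.
From mathcomp Require Import all_classical all_reals all_analysis.
From mathcomp Require Import ring lra.
Import Order.TTheory GRing.Theory Num.Theory.
Import numFieldNormedType.Exports.
Set Implicit Arguments.
Unset Strict Implicit.
Unset Printing Implicit Defensive.

Local Open Scope ring_scope.

(* Writing g = f + h gives |L|^n <= |F_n| |B|, with B the Hamming ball of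
   radius delta n.  Since q is coprime to n, i |-> q i mod n permutes Z/nZ; an
   f in F_n is determined by its values at one point of each cycle, and on a
   cycle of length l that value is a root of X^(q^l) - X, so |F_n| <= q^n.
   Weighting each word h by (delta/(Q-1))^wt(h) (1-delta)^(n-wt(h)) defines a
   probability on L^n which, for delta <= 1/2, gives every word of B weight at
   least 2^(-n h2(delta)) (Q-1)^(-delta n); hence
   |B| <= 2^(n h2(delta)) (Q-1)^(delta n).  Taking logarithms yields the bound
   with no error term at all. *)

Lemma mulq_ord_inj (q n : nat) : coprime q n -> injective (@mulq_ord n q).
Proof.
move=> coprime_qn i j; wlog le_ij : i j / (i <= j)%N => [le_inj eq_ij|].
  case: (leqP i j) => [le_ij | /ltnW le_ji]; first exact: le_inj.
  exact/esym/le_inj.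
move=> /(congr1 val) /= /eqP; rewrite eq_sym eqn_mod_dvd ?leq_mul2l ?le_ij ?orbT //.
rewrite -mulnBr Gauss_dvdr 1?coprime_sym // /dvdn modn_small.
  by rewrite subn_eq0 => le_ji; apply/val_inj/anti_leq; rewrite le_ij.
exact: leq_ltn_trans (leq_subr i j) (ltn_ord j).
Qed.

Lemma coprime_of_dvdn_pred_expn (q m n : nat) : (0 < q)%N -> (0 < m)%N ->
  (n %| (q ^ m).-1)%N -> coprime q n.
Proof.
move=> q_gt0 m_gt0 n_dvd; rewrite -(coprime_pexpl _ _ m_gt0).
by apply: coprime_dvdr n_dvd _; rewrite coprime_sym coprimePn // expn_gt0 q_gt0.
Qed.

Lemma prime_power_gt1 (q : nat) : prime_power q -> (1 < q)%N.
Proof.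
by case=> p [k [p_prime [k_gt0 ->]]]; rewrite -[1%N](expn0 p) ltn_exp2l ?prime_gt1.
Qed.

Lemma card_roots_Xn_sub_X (L : finFieldType) (N : nat) : (1 < N)%N ->
  (#|[set y : L | y ^+ N == y]| <= N)%N.
Proof.
move=> N_gt1; pose p : {poly L} := 'X^N - 'X.
have size_p : size p = N.+1.
  by rewrite size_polyDl size_polyXn // size_polyN size_polyX ltnS.
have p_neq0 : p != 0 by rewrite -size_poly_eq0 size_p.
rewrite cardE -ltnS -size_p; apply: max_poly_roots p_neq0 _ (enum_uniq _).
apply/allP => y; rewrite mem_enum inE => /eqP yN.
by rewrite /root !hornerE yN subrr.
Qed.

Lemma porbits_partition (T : finType) (s : {perm T}) :
  finset.partition (porbits s) [set: T].
Proof.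
have -> : porbits s = orbit 'P <[s]> @: [set: T].
  by apply/setP => X; apply/imsetP/imsetP => -[x _ ->]; exists x; rewrite ?inE ?porbitE.
by apply: orbit_partition; apply/actsP => x _ y; rewrite !inE.
Qed.

Section FrobeniusEquivariant.
Variables (T : finType) (L : finFieldType) (q : nat) (s : {perm T}).

Definition frob_equivariant : {set {ffun T -> L}} :=
  [set f : {ffun T -> L} | [forall x, f (s x) == f x ^+ q]].

Lemma frob_equivariant_expg f k x : f \in frob_equivariant ->
  f ((s ^+ k)%g x) = f x ^+ (q ^ k).
Proof.
rewrite inE => /forallP f_eqv; elim: k => [|k IHk].
  by rewrite expg0 perm1 expr1.
by rewrite expgSr permM (eqP (f_eqv _)) IHk expnSr exprM.
Qed.

Lemma frob_equivariant_porbit f x : f \in frob_equivariant ->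
  f x ^+ (q ^ #|porbit s x|) = f x.
Proof. by move=> f_eqv; rewrite -frob_equivariant_expg // permX iter_porbit. Qed.

Definition porbit_values (f : {ffun T -> L}) : {ffun {set T} -> L} :=
  [ffun X => if X \in porbits s then
     (if [pick x in X] is Some x then f x else 0) else 0].

(* Off the cycles porbit_values is 0, so [set 0] there contributes a factor 1
   to the count. *)
Definition porbit_roots (X : {set T}) : {set L} :=
  if X \in porbits s then [set y | y ^+ (q ^ #|X|) == y] else [set 0].

Lemma porbit_values_inj : {in frob_equivariant &, injective porbit_values}.
Proof.
move=> f g f_eqv g_eqv /ffunP fg; apply/ffunP => x.
have := fg (porbit s x); rewrite !ffunE imset_f //.
case: pickP => [y | /(_ x)]; last by rewrite porbit_id.
rewrite porbit_sym => /porbitP[k ->] fgy.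
by rewrite !frob_equivariant_expg // fgy.
Qed.

Lemma porbit_values_family f : f \in frob_equivariant ->
  porbit_values f \in family porbit_roots.
Proof.
move=> f_eqv; apply/familyP => X; rewrite /porbit_roots ffunE.
case: ifP => [/imsetP[x _ ->] | _]; last by rewrite inE.
case: pickP => [y | /(_ x)]; last by rewrite porbit_id.
rewrite inE -eq_porbit_mem => /eqP <-.
by rewrite frob_equivariant_porbit.
Qed.

Hypothesis q_gt1 : (1 < q)%N.

Lemma card_frob_equivariant : (#|frob_equivariant| <= q ^ #|T|)%N.
Proof.
rewrite -(card_in_imset porbit_values_inj).
have sub_family : porbit_values @: frob_equivariant \subset family porbit_roots.
  by apply/fintype.subsetP => _ /imsetP[f f_eqv ->]; apply: porbit_values_family.
apply: leq_trans (subset_leq_card sub_family) _.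
rewrite card_family foldrE big_image /= (bigID (mem (porbits s))) /=.
rewrite [X in (_ * X)%N]big1 ?muln1; last first.
  by move=> X /negbTE X_orbit; rewrite /porbit_roots X_orbit cards1.
rewrite -cardsT (card_partition (@porbits_partition _ s)) expn_sum.
apply: leq_prod => X X_orbit; rewrite /porbit_roots X_orbit.
apply: card_roots_Xn_sub_X; case/imsetP: X_orbit => x _ ->.
by rewrite -[1%N](expn0 q) ltn_exp2l // lt0n card_porbit_neq0.
Qed.

End FrobeniusEquivariant.

Lemma card_le_weight_sum (R : numDomainType) (T : finType) (A : {set T})
    (w : T -> R) (K : R) :
  0 <= K -> (forall x, 0 <= w x) -> (forall x, x \in A -> 1 <= K * w x) ->
  #|A|%:R <= K * \sum_x w x.
Proof.
move=> K_ge0 w_ge0 Kw_ge1; rewrite -sum1_card natr_sum mulr_sumr.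
apply: le_trans (ler_sum _ Kw_ge1) _.
rewrite [leRHS](bigID (mem A)) /= lerDl sumr_ge0 // => x _.
exact: mulr_ge0.
Qed.

Lemma h2_ln2 (R : realType) (d : R) : 0 < d < 1 ->
  h2 d * ln 2 = - (d * ln d) - (1 - d) * ln (1 - d).
Proof.
case/andP => d_gt0 d_lt1.
have ln2_neq0 : ln (2 : R) != 0 by rewrite gt_eqF // ln_gt0 // ltr1n.
rewrite /h2 /xlog2x gt_eqF // gt_eqF ?subr_gt0 // /log2.
by field.
Qed.

Lemma h2_0 (R : realType) : h2 (0 : R) = 0.
Proof. by rewrite /h2 /xlog2x eqxx subr0 oner_eq0 /log2 ln1 !mul0r mulr0; lra. Qed.

Lemma entropy_exponent_ge0 (R : realType) (d Q1 N k : R) :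
  0 < d <= 1 / 2 -> 1 <= Q1 -> k <= d * N ->
  0 <= N * (h2 d * ln 2 + d * ln Q1) + (k * ln (d / Q1) + (N - k) * ln (1 - d)).
Proof.
case/andP => d_gt0 d_le_half Q1_ge1 k_le.
rewrite h2_ln2 ?d_gt0 /=; last lra.
rewrite ln_div ?posrE //; last lra.
have -> : N * (- (d * ln d) - (1 - d) * ln (1 - d) + d * ln Q1) +
    (k * (ln d - ln Q1) + (N - k) * ln (1 - d)) =
    (d * N - k) * (ln (1 - d) - ln d + ln Q1) by ring.
have ln_d_le : ln d <= ln (1 - d) by rewrite ler_ln ?posrE //; lra.
have ln_Q1_ge0 : 0 <= ln Q1 by apply: ln_ge0.
apply: mulr_ge0; lra.
Qed.

Section HammingBall.
Variables (R : realType) (L : finFieldType) (n : nat).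

Definition hamming_ball (r : R) : {set {ffun 'I_n -> L}} :=
  [set h : {ffun 'I_n -> L} | (wt h)%:R <= r].

Definition word_weight (a b : R) (h : {ffun 'I_n -> L}) : R :=
  \prod_i (if h i == 0 then b else a).

Lemma sum_word_weight a b :
  \sum_h word_weight a b h = (b + (#|L|.-1)%:R * a) ^+ n.
Proof.
rewrite -(bigA_distr_bigA (fun (i : 'I_n) (y : L) => if y == 0 then b else a)).
rewrite prodr_const card_ord (bigD1 0) //= eqxx.
rewrite (eq_bigr (fun _ => a)) => [|y /negbTE -> //].
by rewrite sumr_const cardC1 mulr_natl.
Qed.

Lemma word_weightE a b h : word_weight a b h = a ^+ wt h * b ^+ (n - wt h).
Proof.
have card_zeros : #|[set i | h i == 0]| = (n - wt h)%N.
  rewrite -[X in (X - _)%N]card_ord -(cardsC [set i | h i != 0]) addKn.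
  by apply: eq_card => i; rewrite !inE negbK.
rewrite /word_weight (bigID (fun i => h i == 0)) /= mulrC.
rewrite (eq_bigr (fun _ => a)) => [|i /negbTE -> //].
rewrite [X in _ * X](eq_bigr (fun _ => b)) => [|i -> //].
rewrite !prodr_const -card_zeros /wt.
by congr (_ ^+ _ * _ ^+ _); apply: eq_card => i; rewrite !inE.
Qed.

Lemma card_hamming_ball0 : (#|hamming_ball 0| <= 1)%N.
Proof.
rewrite -(cards1 (0 : {ffun 'I_n -> L})); apply/subset_leq_card/fintype.subsetP => h.
rewrite !inE lern0 cards_eq0 => /eqP wt0; apply/eqP/ffunP => i.
by move/setP/(_ i): wt0; rewrite !inE ffunE => /negbFE/eqP.
Qed.

Lemma card_hamming_ball (d : R) : 0 <= d <= 1 / 2 ->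
  #|hamming_ball (d * n%:R)|%:R <=
    expR (n%:R * (h2 d * ln 2 + d * ln (#|L|.-1)%:R)).
Proof.
case/andP; rewrite le0r => /orP[/eqP -> _ | d_gt0 d_le_half].
  rewrite mul0r h2_0 !mul0r add0r mulr0 expR0 -[1]/(1%:R) ler_nat.
  exact: card_hamming_ball0.
have Q1_ge1 : 1 <= (#|L|.-1)%:R :> R.
  by rewrite ler1n ltn_predRL card_finNzRing_gt1.
set a := d / (#|L|.-1)%:R; set b := 1 - d.
have a_gt0 : 0 < a by rewrite divr_gt0 //; lra.
have b_gt0 : 0 < b by rewrite /b; lra.
have weight_total : b + (#|L|.-1)%:R * a = 1.
  by rewrite /a mulrC divfK /b ?subrK // gt_eqF //; lra.
set K := expR _.
have weighted_count : #|hamming_ball (d * n%:R)|%:R <= K * \sum_h word_weight a b h.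
  apply: card_le_weight_sum => [|h|h].
  - exact: expR_ge0.
  - by rewrite word_weightE mulr_ge0 // exprn_ge0 // ltW.
  rewrite inE word_weightE => wt_le.
  have wt_le_n : (wt h <= n)%N by rewrite -[X in (_ <= X)%N]card_ord max_card.
  rewrite -[a]lnK ?posrE // -[b]lnK ?posrE // -!expRM_natl -!expRD.
  rewrite -[leLHS]expR0 ler_expR natrB //.
  by apply: entropy_exponent_ge0 => //; apply/andP.
by rewrite sum_word_weight weight_total expr1n mulr1 in weighted_count.
Qed.

End HammingBall.

Lemma card_le_mul_of_onto (aT bT rT : finType) (op : aT -> bT -> rT)
    (A : {set aT}) (B : {set bT}) :
  (forall z, exists x y, [/\ x \in A, y \in B & z = op x y]) ->
  (#|rT| <= #|A| * #|B|)%N.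
Proof.
move=> onto; rewrite -cardsX -cardsT.
apply: leq_trans (leq_imset_card (fun xy => op xy.1 xy.2) _).
apply/subset_leq_card/fintype.subsetP => z _.
have [x [y [xA yB ->]]] := onto z.
by apply/imsetP; exists (x, y); rewrite ?inE ?xA.
Qed.

Lemma card_le_Fn_hamming_ball (R : realType) (L : finFieldType) (q n : nat)
    (d : R) (coprime_qn : coprime q n) :
  Fn_covers L q n d ->
  (#|L| ^ n <= #|frob_equivariant L q (perm (mulq_ord_inj coprime_qn))|
              * #|hamming_ball L n (d * n%:R)|)%N.
Proof.
move=> covers; rewrite -[X in (_ ^ X)%N]card_ord -card_ffun.
pose add (f h : {ffun 'I_n -> L}) := [ffun i => f i + h i].
apply: (card_le_mul_of_onto (op := add)) => g.
have [f [h [f_Fn [g_fh wt_h]]]] := covers g.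
exists (finfun f), (finfun h); split.
- by rewrite inE; apply/forallP => i; rewrite !ffunE permE f_Fn.
- rewrite inE (_ : wt (finfun h) = wt h); last by apply: eq_card => i; rewrite !inE ffunE.
  by move: wt_h; rewrite floor_ge_int.
- by apply/ffunP => i; rewrite !ffunE g_fh.
Qed.

Lemma rate_le_of_card (R : realType) (q m n : nat) (E : R) :
  (1 < q)%N -> (0 < n)%N ->
  ((q ^ m) ^ n)%:R <= (q ^ n)%:R * expR (n%:R * E) -> m%:R <= 1 + E / ln q%:R.
Proof.
move=> q_gt1 n_gt0.
have q_pos : (q%:R : R) \is Num.pos by rewrite posrE ltr0n ltnW.
have ln_q_gt0 : 0 < ln (q%:R : R) by rewrite ln_gt0 // ltr1n.
rewrite -expnM !natrX -(ler_ln (rpredX _ q_pos)); last first.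
  by rewrite posrE mulr_gt0 ?expR_gt0 // exprn_gt0 // -posrE.
rewrite lnM ?rpredX ?posrE ?expR_gt0 // !lnXn // expRK.
rewrite -[_ *+ (m * n)]mulr_natr -[_ *+ n]mulr_natr natrM => le_logs.
have n_pos : 0 < (n%:R : R) by rewrite ltr0n.
rewrite -(ler_pM2r ln_q_gt0) mulrDl mul1r divfK ?gt_eqF // -(ler_pM2l n_pos).
lra.
Qed.

Local Open Scope classical_set_scope.
Local Open Scope ring_scope.

Theorem corollary11p4 (R : realType) :
  exists eps : nat -> R, eps @ \oo --> (0 : R) /\
  forall (L : finFieldType) (q m n : nat) (delta : R),
    prime_power q ->
    #|L| = (q ^ m)%N ->
    (n %| (q ^ m).-1)%N ->
    0 <= delta -> delta <= 1 / 2 ->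
    Fn_covers L q n delta ->
    m%:R - eps n <=
      1 + h2 delta / log2 (q%:R : R) + delta * logb (q%:R : R) ((q ^ m).-1)%:R.
Proof.
exists (fun=> 0); split; first exact: cvg_cst.
move=> L q m n d /prime_power_gt1 q_gt1 card_L n_dvd d_ge0 d_le_half covers.
have Q_gt1 : (1 < q ^ m)%N by rewrite -card_L card_finNzRing_gt1.
have m_gt0 : (0 < m)%N by case: m Q_gt1 {card_L n_dvd}; rewrite ?expn0.
have n_gt0 : (0 < n)%N by apply: dvdn_gt0 n_dvd; rewrite ltn_predRL.
have coprime_qn := coprime_of_dvdn_pred_expn (ltnW q_gt1) m_gt0 n_dvd.
set E := h2 d * ln 2 + d * ln ((q ^ m).-1)%:R.
have count : ((q ^ m) ^ n)%:R <= (q ^ n)%:R * expR (n%:R * E) :> R.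
  have := card_le_Fn_hamming_ball coprime_qn covers.
  rewrite -(ler_nat R) natrM card_L => /le_trans; apply; apply: ler_pM => //.
    by rewrite ler_nat -[X in (_ ^ X)%N]card_ord card_frob_equivariant.
  by rewrite /E -card_L card_hamming_ball ?d_ge0.
have ln_neq0 (x : nat) : (1 < x)%N -> ln (x%:R : R) != 0.
  by move=> x_gt1; rewrite gt_eqF // ln_gt0 // ltr1n.
rewrite subr0 /log2 /logb -addrA.
have -> : h2 d / (ln (q%:R : R) / ln 2) + d * (ln ((q ^ m).-1)%:R / ln q%:R) = E / ln q%:R.
  by rewrite /E; field; rewrite !ln_neq0.
exact: rate_le_of_card count.
Qed.
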